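(* Let $F,G\colon I\to\mathsf{Top}$ be diagrams of topological spaces and $\alpha\colon F\Rightarrow G$ a natural transformation such that each $\alpha_i\colon F(i)\to G(i)$ is a closed inclusion. Suppose that for each $i\in I$ the commutative square formed by $\alpha_i$, the colimit maps $\mu_i\colon F(i)\to\mathrm{colim}(F)$, $\nu_i\colon G(i)\to\mathrm{colim}(G)$ and the induced map $\alpha_*\colon\mathrm{colim}(F)\to\mathrm{colim}(G)$ is Cartesian in the category of sets (i.e. the canonical function from $F(i)$ to the set-theoretic pullback of $G(i)\to\mathrm{colim}(G)\leftarrow\mathrm{colim}(F)$ is a bijection). Then $\alpha_*$ is a closed inclusion. The same holds with ''closed inclusion'' replaced by ''open inclusion'' throughout. *)

From HB Require Import structures.
From mathcomp Require Import all_boot all_algebra.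
From mathcomp Require Import boolp classical_sets functions topology.
Set Implicit Arguments. Unset Strict Implicit. Unset Printing Implicit Defensive.
Local Open Scope classical_set_scope.

Record category := Category {
  ob : Type;
  hom : ob -> ob -> Type;
  idc : forall a, hom a a;
  comp : forall a b c, hom b c -> hom a b -> hom a c;
  comp_idl : forall a b (f : hom a b), comp (idc b) f = f;
  comp_idr : forall a b (f : hom a b), comp f (idc a) = f;
  comp_assoc : forall a b c d (f : hom c d) (g : hom b c) (h : hom a b),
      comp f (comp g h) = comp (comp f g) h }.

Record diagram (I : category) := Diagram {
  dob : ob I -> topologicalType;
  dmap : forall a b, hom a b -> dob a -> dob b;
  dmap_cont : forall a b (f : hom a b), continuous (dmap f);
  dmap_id : forall a (x : dob a), dmap (idc a) x = x;
  dmap_comp : forall a b c (f : hom b c) (g : hom a b) (x : dob a),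
      dmap (comp f g) x = dmap f (dmap g x) }.

Arguments dmap {I} d {a b} _ _.
Arguments dob {I} d _.

Definition nat_trans (I : category) (F G : diagram I)
    (alpha : forall i, dob F i -> dob G i) : Prop :=
  (forall i, continuous (alpha i)) /\
  (forall a b (f : hom a b) (x : dob F a),
      alpha b (dmap F f x) = dmap G f (alpha a x)).

Definition cocone (I : category) (F : diagram I) (X : topologicalType)
    (mu : forall i, dob F i -> X) : Prop :=
  (forall i, continuous (mu i)) /\
  (forall a b (f : hom a b) (x : dob F a), mu b (dmap F f x) = mu a x).

Definition is_colimit (I : category) (F : diagram I) (X : topologicalType)
    (mu : forall i, dob F i -> X) : Prop :=
  cocone mu /\
  forall (Z : topologicalType) (nu : forall i, dob F i -> Z), cocone nu ->
    exists! h : X -> Z, continuous h /\ (forall i x, h (mu i x) = nu i x).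

Definition closed_inclusion (X Y : topologicalType) (f : X -> Y) : Prop :=
  injective f /\ continuous f /\ (forall A : set X, closed A -> closed (f @` A)).
Definition open_inclusion (X Y : topologicalType) (f : X -> Y) : Prop :=
  injective f /\ continuous f /\ (forall A : set X, open A -> open (f @` A)).

Definition set_cartesian (A B C D : Type) (a : A -> B) (m : A -> C)
    (n : B -> D) (s : C -> D) : Prop :=
  injective (fun x => (a x, m x)) /\
  [set (a x, m x) | x in [set: A]] = [set p : B * C | n p.1 = s p.2].

(** The colimit topology is final with respect to the colimit maps; this is
    seen by mapping into the Sierpinski space, whose continuous maps are the
    indicators of open sets, and the colimit maps are jointly surjective, as
    seen by mapping into an indiscrete space.  The Cartesian squares say that
    [nu_i^-1 (alpha_* A) = alpha_i (mu_i^-1 A)], so if each [alpha_i] is closed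
    (open), every [nu_i^-1 (alpha_* A)] with [A] closed (open) is closed (open),
    hence so is [alpha_* A]; injectivity of [alpha_*] follows in the same way
    from the surjectivity of the [mu_i] and the injectivity of the [alpha_i]. *)

From HB Require Import structures.
From mathcomp Require Import all_boot all_algebra.
From mathcomp Require Import boolp classical_sets functions topology.
Local Open Scope classical_set_scope.

Definition sierpinski := bool.
HB.instance Definition _ := Choice.on sierpinski.

Definition sierpinski_open : set_system sierpinski := fun A => A false -> A true.

Lemma sierpinski_openT : sierpinski_open setT. Proof. by []. Qed.

Lemma sierpinski_openI : setI_closed sierpinski_open.
Proof. by move=> A B oA oB [/oA ? /oB ?]. Qed.

Lemma sierpinski_open_bigcup (K : Type) (A : K -> set sierpinski) :
  (forall k, sierpinski_open (A k)) -> sierpinski_open (\bigcup_k A k).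
Proof. by move=> oA [k _ Akf]; exists k => //; apply: oA. Qed.

HB.instance Definition _ := isOpenTopological.Build sierpinski
  sierpinski_openT sierpinski_openI sierpinski_open_bigcup.

Lemma sierpinski_continuous (X : topologicalType) (f : X -> sierpinski) :
  open (f @^-1` [set true]) -> continuous f.
Proof.
move=> of1; apply/continuousP => A oA.
have [Af|nAf] := pselect (A false).
  have -> : f @^-1` A = setT.
    by apply/seteqP; split=> // x _ /=; case: (f x) => //; apply: oA.
  exact: openT.
have [At|nAt] := pselect (A true).
  have -> // : f @^-1` A = f @^-1` [set true].
  by apply/seteqP; split=> x /=; case: (f x).
have -> : f @^-1` A = set0 by apply/seteqP; split=> x //=; case: (f x).
exact: open0.
Qed.

Definition indiscrete_bool := bool.
HB.instance Definition _ := Choice.on indiscrete_bool.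

Definition indiscrete_open : set_system indiscrete_bool :=
  fun A => A false <-> A true.

Lemma indiscrete_openT : indiscrete_open setT. Proof. by []. Qed.

Lemma indiscrete_openI : setI_closed indiscrete_open.
Proof. by move=> A B oA oB; split=> -[/oA ? /oB ?]. Qed.

Lemma indiscrete_open_bigcup (K : Type) (A : K -> set indiscrete_bool) :
  (forall k, indiscrete_open (A k)) -> indiscrete_open (\bigcup_k A k).
Proof. by move=> oA; split=> -[k _ Ak]; exists k => //; apply/oA. Qed.

HB.instance Definition _ := isOpenTopological.Build indiscrete_bool
  indiscrete_openT indiscrete_openI indiscrete_open_bigcup.

Lemma indiscrete_continuous (X : topologicalType) (f : X -> indiscrete_bool) :
  continuous f.
Proof.
apply/continuousP => A oA.
have [At|nAt] := pselect (A true).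
  have -> : f @^-1` A = setT.
    by apply/seteqP; split=> // x _ /=; case: (f x) => //; apply/oA.
  exact: openT.
have -> : f @^-1` A = set0 by apply/seteqP; split=> x //=; case: (f x) => // /oA.
exact: open0.
Qed.

Section Colimit.
Context {I : category} {G : diagram I} {X : topologicalType}.
Context {nu : forall i, dob G i -> X}.
Hypothesis colim_nu : is_colimit nu.

Lemma colimit_map_unique (Z : topologicalType) (h1 h2 : X -> Z) :
  continuous h1 -> continuous h2 ->
  (forall i x, h1 (nu i x) = h2 (nu i x)) -> h1 = h2.
Proof.
move=> h1c h2c h12; have [[nuc nuG] colim] := colim_nu.
have cocone_h1 : cocone (fun i x => h1 (nu i x)).
  split=> [i x|a b f x]; last by rewrite nuG.
  exact: continuous_comp (nuc i x) (h1c _).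
have [h [_ hu]] := colim _ _ cocone_h1.
by rewrite -(hu h1) // (hu h2) //; split=> // i x; rewrite h12.
Qed.

Lemma colimit_cover (y : X) : exists i x, nu i x = y.
Proof.
pose covered (y : X) : indiscrete_bool := `[< exists i x, nu i x = y >].
have : covered = fun _ => true.
  apply: colimit_map_unique => [||i x]; try exact: indiscrete_continuous.
  by apply/asboolP; exists i, x.
by move/(congr1 (fun h => h y))/asboolP.
Qed.

Lemma colimit_open (U : set X) : (forall i, open (nu i @^-1` U)) -> open U.
Proof.
move=> oU; have [[_ nuG] colim] := colim_nu.
pose indicator i (x : dob G i) : sierpinski := `[< U (nu i x) >].
have cocone_indicator : cocone indicator.
  split=> [i|a b f x]; last by rewrite /indicator nuG.
  apply: sierpinski_continuous.
  suff -> : indicator i @^-1` [set true] = nu i @^-1` U by [].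
  by apply/seteqP; split=> x /asboolP.
have [h [[hc hnu] _]] := colim _ _ cocone_indicator.
suff -> : U = h @^-1` [set true] by exact: open_comp.
apply/seteqP; split=> y; have [i [x <-]] := colimit_cover y.
  by rewrite /= hnu => Uy; apply/asboolP.
by rewrite /= hnu => /asboolP.
Qed.

End Colimit.

Section CartesianSquare.
Context {A B C D : Type} {a : A -> B} {m : A -> C} {n : B -> D} {s : C -> D}.
Hypothesis cart : set_cartesian a m n s.

Lemma set_cartesian_commute x : n (a x) = s (m x).
Proof.
have [_ pb] := cart.
suff : [set p : B * C | n p.1 = s p.2] (a x, m x) by [].
by rewrite -pb; exists x.
Qed.

Lemma set_cartesian_lift y c : n y = s c -> exists x, a x = y /\ m x = c.
Proof.
move=> nys; have [_ pb] := cart.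
have : [set p : B * C | n p.1 = s p.2] (y, c) by [].
by rewrite -pb => -[x _ [<- <-]]; exists x.
Qed.

Lemma set_cartesian_preimage_image (S : set C) :
  n @^-1` (s @` S) = a @` (m @^-1` S).
Proof.
apply/seteqP; split=> y /=.
  by move=> [c Sc /esym/set_cartesian_lift [x [<- mxc]]]; exists x; rewrite //= mxc.
by move=> [x Smx <-]; exists (m x); rewrite // set_cartesian_commute.
Qed.

End CartesianSquare.

Section CartesianFamily.
Context {K : Type} {A B : K -> Type} {C D : Type}.
Context {a : forall k, A k -> B k} {m : forall k, A k -> C}.
Context {n : forall k, B k -> D} {s : C -> D}.
Hypothesis cart : forall k, set_cartesian (a k) (m k) (n k) s.

Lemma set_cartesian_injective : (forall c, exists k x, m k x = c) ->
  (forall k, injective (a k)) -> injective s.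
Proof.
move=> m_cover a_inj c1 c2; have [k [x <-]] := m_cover c1 => s12.
have /(set_cartesian_lift (cart k)) [x' [ax'x <-]] : n k (a k x) = s c2.
  by rewrite (set_cartesian_commute (cart k)) s12.
by rewrite (a_inj k _ _ ax'x).
Qed.

End CartesianFamily.

Section CartesianMaps.
Context {K : Type} {A B : K -> topologicalType} {C D : topologicalType}.
Context {a : forall k, A k -> B k} {m : forall k, A k -> C}.
Context {n : forall k, B k -> D} {s : C -> D}.
Hypothesis cart : forall k, set_cartesian (a k) (m k) (n k) s.
Hypothesis m_cont : forall k, continuous (m k).
Hypothesis n_final : forall U, (forall k, open (n k @^-1` U)) -> open U.

Lemma set_cartesian_open_map : (forall k S, open S -> open (a k @` S)) ->
  forall S, open S -> open (s @` S).
Proof.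
move=> a_open S oS; apply: n_final => k.
rewrite (set_cartesian_preimage_image (cart k)).
by apply: a_open; apply: (continuousP _).1 (m_cont k) _ oS.
Qed.

Lemma set_cartesian_closed_map : (forall k S, closed S -> closed (a k @` S)) ->
  forall S, closed S -> closed (s @` S).
Proof.
move=> a_closed S cS; rewrite -openC; apply: n_final => k.
rewrite -preimage_setC openC (set_cartesian_preimage_image (cart k)).
by apply: a_closed; apply: (continuous_closedP _).1 (m_cont k) _ cS.
Qed.

End CartesianMaps.

Theorem lemma6p1 (I : category) (F G : diagram I)
    (alpha : forall i, dob F i -> dob G i)
    (XF XG : topologicalType)
    (mu : forall i, dob F i -> XF) (nu : forall i, dob G i -> XG)
    (astar : XF -> XG) :
  nat_trans alpha ->
  is_colimit mu -> is_colimit nu ->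
  continuous astar -> (forall i x, astar (mu i x) = nu i (alpha i x)) ->
  (forall i, set_cartesian (alpha i) (mu i) (nu i) astar) ->
  ((forall i, closed_inclusion (alpha i)) -> closed_inclusion astar) /\
  ((forall i, open_inclusion (alpha i)) -> open_inclusion astar).
Proof.
move=> _ colim_mu colim_nu astar_cont _ cart.
have mu_cont := proj1 (proj1 colim_mu).
have nu_final := colimit_open colim_nu.
have astar_inj := set_cartesian_injective cart (colimit_cover colim_mu).
split=> [alpha_closed | alpha_open].
- split; first by apply: astar_inj => i; case: (alpha_closed i).
  split=> //; apply: set_cartesian_closed_map cart mu_cont nu_final _ => i.
  by case: (alpha_closed i) => _ [].
- split; first by apply: astar_inj => i; case: (alpha_open i).
  split=> //; apply: set_cartesian_open_map cart mu_cont nu_final _ => i.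
  by case: (alpha_open i) => _ [].
Qed.
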